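(* Let $X$ be a fake weighted projective space with weights $(\lambda_0,\lambda_1,\ldots,\lambda_n)$ and associated $n$-simplex $P$, and suppose $X$ has at worst canonical singularities. Then $$\mathrm{mult}\,P\leq\frac{h^{n-1}}{\lambda_1\lambda_2\cdots\lambda_n},\qquad\text{where }h:=\sum_{i=0}^n\lambda_i.$$
   Context: Let $N\cong\mathbb{Z}^n$ be a lattice and $N_\mathbb{R}:=N\otimes_\mathbb{Z}\mathbb{R}$. Let $\rho_0,\ldots,\rho_n\in N$ be primitive lattice points with $N_\mathbb{R}=\sum_{i=0}^n\mathbb{R}_{\geq0}\rho_i$. There are positive integers $\lambda_0,\ldots,\lambda_n$ with $\gcd\{\lambda_0,\ldots,\lambda_n\}=1$ such that $\sum_{i=0}^n\lambda_i\rho_i=0$. The cones $\sigma_i$ generated by $\{\rho_j: j\neq i\}$ generate a complete simplicial fan; the associated projective toric variety $X$ is called a fake weighted projective space with weights $(\lambda_0,\ldots,\lambda_n)$ (indexed consistently with the $\rho_i$), and $P:=\mathrm{conv}\{\rho_0,\ldots,\rho_n\}$ is its associated simplex. The multiplicity is $\mathrm{mult}\,P:=[N:\mathbb{Z}\rho_0+\cdots+\mathbb{Z}\rho_n]$. *)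

From HB Require Import structures.
From mathcomp Require Import all_boot all_order all_algebra.
Set Implicit Arguments. Unset Strict Implicit. Unset Printing Implicit Defensive.
Import Order.TTheory GRing.Theory Num.Theory.
Local Open Scope ring_scope.

(* The lattice N = Z^n is modelled as row vectors 'rV[int]_n. *)

Definition primitive (n : nat) (v : 'rV[int]_n) : Prop :=
  forall (k : int) (w : 'rV[int]_n), v = k *: w -> k = 1 \/ k = -1.

Definition toR (R : realFieldType) (n : nat) (v : 'rV[int]_n) : 'rV[R]_n :=
  map_mx (fun z : int => z%:~R) v.

Definition in_sublattice (n : nat) (rho : 'I_n.+1 -> 'rV[int]_n)
  (v : 'rV[int]_n) : Prop :=
  exists c : 'I_n.+1 -> int, v = \sum_(i < n.+1) c i *: rho i.

(* m is the index [N : Z rho_0 + ... + Z rho_n]: there is a complete system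
   of m pairwise incongruent representatives of N modulo the sublattice. *)
Definition is_index (n : nat) (rho : 'I_n.+1 -> 'rV[int]_n) (m : nat) : Prop :=
  exists s : seq 'rV[int]_n,
    size s = m /\
    (forall i j : nat, (i < m)%N -> (j < m)%N -> i <> j ->
        ~ in_sublattice rho (nth 0 s i - nth 0 s j)) /\
    (forall v : 'rV[int]_n, exists2 x, x \in s & in_sublattice rho (v - x)).

Definition positively_spanning (R : realFieldType) (n : nat)
  (rho : 'I_n.+1 -> 'rV[int]_n) : Prop :=
  forall x : 'rV[R]_n, exists c : 'I_n.+1 -> R,
    (forall i, 0 <= c i) /\ x = \sum_(i < n.+1) c i *: toR R (rho i).

(* Toric criterion for canonical singularities (Reid): for every maximal cone
   sigma_i = cone(rho_j : j <> i), the only lattice point of sigma_i lying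
   strictly below the hyperplane through the rho_j (j <> i), i.e. with
   "height" sum_j c_j < 1, is the origin. *)
Definition canonical_fwps (R : realFieldType) (n : nat)
  (rho : 'I_n.+1 -> 'rV[int]_n) : Prop :=
  forall (i : 'I_n.+1) (v : 'rV[int]_n) (c : 'I_n.+1 -> R),
    (forall j, 0 <= c j) -> c i = 0 ->
    toR R v = \sum_(j < n.+1) c j *: toR R (rho j) ->
    \sum_(j < n.+1) c j < 1 -> v = 0.

From mathcomp Require Import all_boot all_order all_algebra.
From mathcomp Require Import zify ring lra.
Import Order.TTheory GRing.Theory Num.Theory.
Local Open Scope ring_scope.
Set Implicit Arguments. Unset Strict Implicit. Unset Printing Implicit Defensive.

(* Write w_j := rho_(j+1) - rho_0 and beta_j := lambda_(j+1) / h, so that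
   -rho_0 = sum_j beta_j w_j.  By the canonical-singularity criterion the only
   lattice point in the interior of P is the origin; in the basis w this says
   that a lattice point whose coordinates satisfy |d_j| < beta_j is 0.  Hence
   the boxes prod_j [0, beta_j) placed at lattice points that are distinct
   modulo L := sum_j Z w_j do not overlap.  Modulo L there are (mult P) * h
   classes, h being the order of rho_0 modulo L since the lambda_i are coprime,
   so (mult P) * h * prod_j beta_j <= 1, which is the bound.  The volume
   comparison is made discrete by scaling with Q := h |det (w_j)_j|: the boxes
   become integer grids and the comparison a pigeonhole count in (Z / Q)^n.
   Finiteness of the index comes from the Smith normal form. *)

Definition rowlat (k n : nat) (A : 'M[int]_(k, n)) (v : 'rV[int]_n) : Prop :=
  exists c : 'rV[int]_k, v = c *m A.

Lemma modz_eq_small (d a b : int) :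
  0 <= a < `|d| -> 0 <= b < `|d| -> (d %| a - b)%Z -> a = b.
Proof.
move=> ha hb; rewrite -eqz_mod_dvd -modz_abs -[(b %% _)%Z]modz_abs.
by rewrite !modz_small // => /eqP.
Qed.

Lemma leq_mul_expn_pred (a b k : nat) :
  (0 < b)%N -> (a * b <= b ^ k)%N -> (a <= b ^ k.-1)%N.
Proof.
move=> b_gt0; case: k => [|k] /=; rewrite ?expnS => ab.
  by apply: leq_trans ab; rewrite leq_pmulr.
by rewrite -(leq_pmul2r b_gt0) (mulnC (b ^ k)%N).
Qed.

Lemma map_int_unitmx (F : numFieldType) n (M : 'M[int]_n) :
  M \in unitmx -> map_mx intr M \in (unitmx : {pred 'M[F]_n}).
Proof. by rewrite !unitmxE det_map_mx; apply: rmorph_unit. Qed.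

Lemma absz_modz_lt (m d : int) : d != 0 -> (`|(m %% d)%Z| < `|d|)%N.
Proof. by move=> d0; rewrite -ltz_nat gez0_abs ?modz_ge0 ?ltz_mod. Qed.

Section SmithIndex.
Variables (F : numFieldType) (k n : nat) (A : 'M[int]_(k, n)).
Variables (L : 'M[int]_k) (V : 'M[int]_n) (d : seq int).
Hypothesis A_full : row_full (map_mx intr A : 'M[F]_(k, n)).
Hypotheses (L_unit : L \in unitmx) (V_unit : V \in unitmx).
Local Notation D := (\matrix_(i, j) (d`_i *+ (i == j :> nat)) : 'M[int]_(k, n)).
Hypothesis A_smith : A = L *m D *m V.

Lemma smith_diag_neq0 (j : 'I_n) : d`_j != 0.
Proof.
apply/eqP => dj0; have [B] := row_fullP A_full.
rewrite A_smith !map_mxM => BA.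
have fV := map_int_unitmx F V_unit.
have : map_mx intr V *m B *m map_mx intr L *m map_mx intr D = 1%:M :> 'M[F]_n.
  apply: (can_inj (mulmxK fV)); rewrite mul1mx.
  by rewrite -!mulmxA in BA *; rewrite BA mulmx1.
move=> /matrixP /(_ j j); rewrite !mxE eqxx big1 => [/esym/eqP|i _].
  by rewrite oner_eq0.
rewrite !mxE; case: (eqVneq (i : nat) j) => [ij|]; last by rewrite mulr0n rmorph0 mulr0.
by rewrite ij dj0 mul0rn rmorph0 mulr0.
Qed.

Lemma rowlat_smithE v :
  rowlat A v <-> exists2 u : 'rV[int]_n, v = u *m V & forall j, (d`_j %| u ord0 j)%Z.
Proof.
have nk : (n <= k)%N by rewrite -(eqP A_full) rank_leq_row.
split=> [[c ->]|[u -> du]].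
  exists (c *m L *m D); first by rewrite A_smith !mulmxA.
  move=> j; rewrite mxE; apply: rpred_sum => i _; rewrite [D i j]mxE.
  by case: (eqVneq (i : nat) j) => [->|]; rewrite ?mulr1n ?dvdz_mull ?mulr0n ?mulr0 ?dvdz0.
pose c := \sum_(j < n) (u ord0 j %/ d`_j)%Z *: 'e_(widen_ord nk j) : 'rV[int]_k.
exists (c *m invmx L); rewrite A_smith !mulmxA mulmxKV //; congr (_ *m _).
rewrite [LHS]row_sum_delta mulmx_suml; apply: eq_bigr => j _.
rewrite -scalemxAl -rowE.
have -> : row (widen_ord nk j) D = d`_j *: 'e_j.
  by apply/rowP => l; rewrite !mxE eqxx /= mulr_natr eq_sym.
by rewrite scalerA divzK.
Qed.

Definition smith_residue (f : {dffun forall j : 'I_n, 'I_`|d`_j|}) : 'rV[int]_n :=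
  (\row_j (f j : nat)%:Z) *m V.

Lemma smith_residue_inj f g : rowlat A (smith_residue f - smith_residue g) -> f = g.
Proof.
rewrite -mulmxBl => /rowlat_smithE [u /(can_inj (mulmxK V_unit)) fgu du].
apply/ffunP => j; apply/val_inj/eqP; rewrite -eqz_nat; apply/eqP.
apply: (modz_eq_small (d := d`_j)); rewrite ?ltz_nat ?ltn_ord //.
by have := du j; rewrite -fgu !mxE.
Qed.

Lemma smith_residue_cover v : exists f, rowlat A (v - smith_residue f).
Proof.
pose t := v *m invmx V.
pose f := [ffun j => Ordinal (absz_modz_lt (t ord0 j) (smith_diag_neq0 j))].
exists f; apply/rowlat_smithE; exists (t - \row_j (f j : nat)%:Z).
  by rewrite mulmxBl mulmxKV.
clearbody t => j; rewrite !mxE ffunE /= gez0_abs ?modz_ge0 ?smith_diag_neq0 //.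
by rewrite {1}(divz_eq (t ord0 j) d`_j) addrK dvdz_mull.
Qed.

End SmithIndex.

Lemma rowlat_residue_system (F : numFieldType) k n (A : 'M[int]_(k, n)) :
  row_full (map_mx intr A : 'M[F]_(k, n)) ->
  exists s : seq 'rV[int]_n,
    (forall i j, (i < size s)%N -> (j < size s)%N -> i <> j -> ~ rowlat A (s`_i - s`_j)) /\
    (forall v, exists2 x, x \in s & rowlat A (v - x)).
Proof.
move=> A_full; have [L L_unit [V V_unit [d _ A_smith]]] := int_Smith_normal_form A.
pose T := {dffun forall j : 'I_n, 'I_`|d`_j|}.
exists [seq smith_residue V f | f <- enum T]; split=> [i j|v].
  rewrite size_map => ilt jlt ij; have f0 : T by move: ilt; case: (enum T).
  rewrite (nth_map f0 _ _ ilt) (nth_map f0 _ _ jlt).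
  move=> /(smith_residue_inj A_full L_unit V_unit A_smith) /eqP.
  by rewrite nth_uniq ?enum_uniq // => /eqP.
have [f] := smith_residue_cover A_full L_unit V_unit A_smith v.
by exists (smith_residue V f) => //; apply: map_f; rewrite mem_enum.
Qed.

Section Barycentric.
Variables (K : pzRingType) (V : lmodType K) (n : nat).

Definition bary (a : K) (c : 'I_n -> K) (i : 'I_n.+1) : K :=
  if unlift ord0 i is Some j then c j else a.

Lemma bary0 a c : bary a c ord0 = a.
Proof. by rewrite /bary unlift_none. Qed.

Lemma baryS a c j : bary a c (lift ord0 j) = c j.
Proof. by rewrite /bary liftK. Qed.

Lemma sum_bary a c : \sum_i bary a c i = a + \sum_j c j.
Proof. by rewrite big_ord_recl bary0; under eq_bigr do rewrite baryS. Qed.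

Lemma bary_combE a c (r : 'I_n.+1 -> V) : \sum_i bary a c i *: r i =
  (a + \sum_j c j) *: r ord0 + \sum_j c j *: (r (lift ord0 j) - r ord0).
Proof.
rewrite big_ord_recl bary0 scalerDl scaler_suml -addrA -big_split; congr (_ + _).
by apply: eq_bigr => j _; rewrite /= baryS scalerBr addrC subrK.
Qed.

End Barycentric.

Section ToR.
Variables (R : realFieldType) (n : nat).

Lemma toRD (a b : 'rV[int]_n) : toR R (a + b) = toR R a + toR R b.
Proof. exact: map_mxD. Qed.

Lemma toRB (a b : 'rV[int]_n) : toR R (a - b) = toR R a - toR R b.
Proof. exact: map_mxB. Qed.

Lemma toRZ (z : int) (a : 'rV[int]_n) : toR R (z *: a) = z%:~R *: toR R a.
Proof. exact: map_mxZ. Qed.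

Lemma toR_sumZ (I : finType) (c : I -> int) (v : I -> 'rV[int]_n) :
  toR R (\sum_i c i *: v i) = \sum_i (c i)%:~R *: toR R (v i).
Proof. by rewrite /toR map_mx_sum; apply: eq_bigr => i _; rewrite map_mxZ. Qed.

Lemma toR_inj : injective (toR R (n := n)).
Proof. by move=> a b /rowP ab; apply/rowP => j; have := ab j; rewrite !mxE => /intr_inj. Qed.

Lemma toR_eq0 (a : 'rV[int]_n) : (toR R a == 0) = (a == 0).
Proof. by rewrite -(inj_eq toR_inj) /toR map_mx0. Qed.

End ToR.

Section FakeWeightedProjectiveSpace.
Variables (R : realFieldType) (n : nat).
Variables (rho : 'I_n.+1 -> 'rV[int]_n) (lambda : 'I_n.+1 -> nat).
Hypothesis rho_span : positively_spanning R rho.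
Hypothesis lambda_gt0 : forall i, (0 < lambda i)%N.
Hypothesis rho_rel : \sum_(i < n.+1) (lambda i)%:Z *: rho i = 0.

Local Notation h := (\sum_(i < n.+1) lambda i)%N.

Lemma h_gt0 : (0 < h)%N.
Proof. by rewrite big_ord_recl ltn_addr. Qed.

Lemma lambdaR_gt0 i : 0 < (lambda i)%:R :> R.
Proof. by rewrite ltr0n. Qed.

Lemma hR_neq0 : h%:R != 0 :> R.
Proof. by rewrite pnatr_eq0 -lt0n h_gt0. Qed.

Definition rho_mx : 'M[R]_(n.+1, n) := \matrix_i toR R (rho i).

Lemma rho_combE (c : 'I_n.+1 -> R) :
  \sum_i c i *: toR R (rho i) = \row_i c i *m rho_mx.
Proof. by rewrite mulmx_sum_row; apply: eq_bigr => i _; rewrite mxE rowK. Qed.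

Lemma rho_mx_full : row_full rho_mx.
Proof.
rewrite -sub1mx; apply/row_subP => j.
by have [c [_ ->]] := rho_span (row j 1%:M); rewrite rho_combE submxMl.
Qed.

Lemma rho_relR : \sum_i (lambda i)%:R *: toR R (rho i) = 0.
Proof.
transitivity (toR R (\sum_i (lambda i)%:Z *: rho i)); last by rewrite rho_rel /toR map_mx0.
by rewrite toR_sumZ; apply: eq_bigr => i _; rewrite pmulrn.
Qed.

Lemma rho_rel_unique (u : 'I_n.+1 -> R) : \sum_i u i *: toR R (rho i) = 0 ->
  exists t, forall i, u i = t * (lambda i)%:R.
Proof.
pose l : 'rV[R]_n.+1 := \row_i (lambda i)%:R.
have l_neq0 : l != 0.
  apply/negP => /eqP /rowP /(_ ord0) /eqP; rewrite !mxE pnatr_eq0.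
  by have := lambda_gt0 ord0; rewrite lt0n => /negPf ->.
have l_ker : (l <= kermx rho_mx)%MS by apply/sub_kermxP; rewrite -rho_combE rho_relR.
have ker_l : (kermx rho_mx <= l)%MS.
  have := mxrank_leqif_sup l_ker.
  rewrite mxrank_ker (eqP rho_mx_full) subSnn rank_rV l_neq0.
  by move=> /geq_leqif; rewrite leqnn.
rewrite rho_combE => /sub_kermxP /submx_trans /(_ ker_l) /sub_rVP [t ut].
by exists t => i; have := congr1 (fun v : 'rV_n.+1 => v 0 i) ut; rewrite !mxE.
Qed.

Lemma in_sublatticeE v : in_sublattice rho v <-> rowlat (\matrix_i rho i) v.
Proof.
split=> [[c ->]|[c ->]].
  by exists (\row_i c i); rewrite mulmx_sum_row; apply: eq_bigr => i _; rewrite mxE rowK.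
by exists (fun i => c 0 i); rewrite mulmx_sum_row; apply: eq_bigr => i _; rewrite rowK.
Qed.

Lemma is_index_exists : exists m, is_index rho m.
Proof.
have full : row_full (map_mx intr (\matrix_i rho i) : 'M[R]_(n.+1, n)).
  suff -> : map_mx intr (\matrix_i rho i) = rho_mx by exact: rho_mx_full.
  by apply/matrixP => i j; rewrite !mxE.
have [s [s_inc s_cover]] := rowlat_residue_system full.
exists (size s), s; split=> //; split=> [i j ilt jlt ij|v].
  by rewrite in_sublatticeE; exact: s_inc.
by have [x xs vx] := s_cover v; exists x => //; apply/in_sublatticeE.
Qed.

Hypothesis rho_canonical : canonical_fwps R rho.

Lemma canonical_interior_eq0 (x : 'rV[int]_n) (u : 'I_n.+1 -> R) :
  (forall i, 0 < u i) -> \sum_i u i = 1 ->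
  toR R x = \sum_i u i *: toR R (rho i) -> x = 0.
Proof.
move=> u_gt0 u_sum x_u.
(* Subtract t lambda for the largest t keeping every coordinate nonnegative:
   coordinate i0 vanishes and the height drops below 1. *)
pose F i := u i / (lambda i)%:R.
have [i0 _ F_min] := @arg_minP _ _ _ ord0 xpredT F isT.
pose t := F i0.
apply: (rho_canonical (i := i0) (c := fun i => u i - t * (lambda i)%:R)).
- by move=> j; rewrite subr_ge0 -ler_pdivlMr ?lambdaR_gt0 //; exact: F_min.
- by rewrite /t /F divfK ?subrr // lt0r_neq0 // lambdaR_gt0.
- rewrite x_u; under [RHS]eq_bigr do rewrite scalerBl -scalerA.
  by rewrite sumrB -scaler_sumr rho_relR scaler0 subr0.
- rewrite sumrB u_sum -mulr_sumr -natr_sum gtrDl oppr_lt0 mulr_gt0 ?ltr0n ?h_gt0 //.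
  by rewrite /t /F divr_gt0 // lambdaR_gt0.
Qed.

Definition w (j : 'I_n) : 'rV[int]_n := rho (lift ord0 j) - rho ord0.

Lemma bary_rhoE (a : R) c : \sum_i bary a c i *: toR R (rho i) =
  (a + \sum_j c j) *: toR R (rho ord0) + \sum_j c j *: toR R (w j).
Proof. by rewrite bary_combE; congr (_ + _); apply: eq_bigr => j _; rewrite toRB. Qed.

Lemma w_free (c : 'I_n -> R) : \sum_j c j *: toR R (w j) = 0 -> forall j, c j = 0.
Proof.
move=> cw0; have := bary_rhoE (- \sum_j c j) c.
rewrite cw0 addNr scale0r addr0 => /rho_rel_unique [t ct].
have : \sum_i bary (- \sum_j c j) c i = 0 by rewrite sum_bary addNr.
under eq_bigr do rewrite ct.
rewrite -mulr_sumr -natr_sum => /eqP; rewrite mulf_eq0 (negPf hR_neq0) orbF => /eqP t0 j.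
by have := ct (lift ord0 j); rewrite baryS t0 mul0r.
Qed.

Definition beta (j : 'I_n) : R := (lambda (lift ord0 j))%:R / h%:R.

Lemma sum_beta : \sum_j beta j = 1 - (lambda ord0)%:R / h%:R.
Proof.
rewrite -mulr_suml; apply: (mulIf hR_neq0); rewrite mulrBl mul1r !divfK ?hR_neq0 //.
by rewrite natr_sum big_ord_recl addrC addKr.
Qed.

Lemma sum_beta_w : \sum_j beta j *: toR R (w j) = - toR R (rho ord0).
Proof.
have := bary_rhoE ((lambda ord0)%:R / h%:R) beta.
rewrite sum_beta subrKC scale1r.
have -> : \sum_i bary ((lambda ord0)%:R / h%:R) beta i *: toR R (rho i) =
          h%:R^-1 *: \sum_i (lambda i)%:R *: toR R (rho i).
  rewrite scaler_sumr; apply: eq_bigr => i _; rewrite scalerA; congr (_ *: _).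
  by case: (unliftP ord0 i) => [j ->|->]; rewrite ?baryS ?bary0 mulrC.
rewrite rho_relR scaler0.
by move/esym/eqP; rewrite addrC addr_eq0 => /eqP.
Qed.

Lemma w_simplex_lattice_point (y : 'rV[int]_n) (v : 'I_n -> R) :
  (forall j, 0 < v j) -> \sum_j v j < 1 ->
  toR R y = \sum_j v j *: toR R (w j) -> forall j, v j = beta j.
Proof.
move=> v_gt0 v_lt1 y_v.
have y_bary : toR R (y + rho ord0) = \sum_i bary (1 - \sum_j v j) v i *: toR R (rho i).
  by rewrite bary_rhoE subrK scale1r toRD y_v addrC.
have y0 : y + rho ord0 = 0.
  apply: (canonical_interior_eq0 _ _ y_bary); last by rewrite sum_bary subrK.
  by move=> i; case: (unliftP ord0 i) => [j ->|->]; rewrite ?baryS ?bary0 ?subr_gt0.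
move: y_bary; rewrite y0 /toR map_mx0 => /esym /rho_rel_unique [t vt].
have th : t * h%:R = 1.
  transitivity (\sum_i bary (1 - \sum_j v j) v i); last by rewrite sum_bary subrK.
  by rewrite natr_sum mulr_sumr; apply: eq_bigr => i _; rewrite vt.
move=> j; have := vt (lift ord0 j); rewrite baryS => ->.
by rewrite /beta -[t](mulfK hR_neq0) th mul1r mulrC.
Qed.

Lemma w_box_lattice_point_eq0 (e : 'rV[int]_n) (d : 'I_n -> R) :
  toR R e = \sum_j d j *: toR R (w j) -> (forall j, `|d j| < beta j) ->
  forall j, d j = 0.
Proof.
move=> e_d d_lt.
(* The sign s puts s e - rho_0 in the open simplex spanned by the w j. *)
pose s : int := if \sum_j d j <= 0 then 1 else -1.
have s_d : (s%:~R : R) * \sum_j d j <= 0.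
  rewrite /s; case: ifP => [|/negbT]; rewrite ?mul1r // mulN1r oppr_le0 -ltNge.
  exact: ltW.
have sd_gt0 j : 0 < beta j + s%:~R * d j.
  have := d_lt j; rewrite ltr_norml /s.
  by case: ifP => _ /andP [d_gt d_lt']; rewrite ?mul1r ?mulN1r; lra.
have sum_lt1 : \sum_j (beta j + s%:~R * d j) < 1.
  rewrite big_split /= sum_beta -mulr_sumr.
  have : 0 < (lambda ord0)%:R / h%:R :> R by rewrite divr_gt0 ?lambdaR_gt0 ?ltr0n ?h_gt0.
  lra.
have y_sd : toR R (s *: e - rho ord0) = \sum_j (beta j + s%:~R * d j) *: toR R (w j).
  rewrite toRB toRZ e_d -sum_beta_w scaler_sumr addrC -big_split.
  by apply: eq_bigr => j _; rewrite /= scalerDl scalerA.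
move=> j; have := w_simplex_lattice_point sd_gt0 sum_lt1 y_sd j.
rewrite -{2}[beta j]addr0 => /addrI /eqP; rewrite mulf_eq0 => /orP [|/eqP //].
by rewrite /s; case: ifP => _; rewrite ?intrN ?oppr_eq0 oner_eq0.
Qed.

Definition W : 'M[int]_n := \matrix_j w j.

Lemma mulW (c : 'rV[int]_n) : c *m W = \sum_j c 0 j *: w j.
Proof. by rewrite mulmx_sum_row; apply: eq_bigr => j _; rewrite rowK. Qed.

Lemma det_W_neq0 : \det W != 0.
Proof.
apply/negP => /eqP W0.
have : ~~ row_free (map_mx intr W : 'M[R]_n).
  by rewrite row_free_unit unitmxE det_map_mx W0 rmorph0 unitr0.
rewrite -kermx_eq0 => /rowV0Pn [v /sub_kermxP vW]; apply/negP; rewrite negbK.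
apply/eqP/rowP => j; rewrite mxE; apply: (w_free (c := fun j => v 0 j)).
rewrite -[RHS]vW mulmx_sum_row; apply: eq_bigr => k _.
by congr (_ *: _); apply/rowP => l; rewrite !mxE.
Qed.

Definition dW : nat := `|\det W|.

Definition wcoord (y : 'rV[int]_n) : 'rV[int]_n := sgz (\det W) *: (y *m \adj W).

Lemma wcoordB a b : wcoord (a - b) = wcoord a - wcoord b.
Proof. by rewrite /wcoord mulmxBl scalerBr. Qed.

Lemma wcoordP y : wcoord y *m W = dW%:Z *: y.
Proof.
by rewrite /wcoord -scalemxAl -mulmxA mul_adj_mx mul_mx_scalar scalerA -abszEsg.
Qed.

Lemma dW_gt0 : (0 < dW)%N.
Proof. by rewrite absz_gt0 det_W_neq0. Qed.

Lemma toR_wcoordP y : dW%:R *: toR R y = \sum_j (wcoord y 0 j)%:~R *: toR R (w j).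
Proof. by rewrite -toR_sumZ -mulW wcoordP toRZ pmulrn. Qed.

Lemma rho_bary_combE (a : int) (c : 'I_n -> int) :
  \sum_i bary (a - \sum_j c j) c i *: rho i = a *: rho ord0 + \sum_j c j *: w j.
Proof. by rewrite bary_combE subrK. Qed.

Lemma w_sublattice (a : int) (c : 'I_n -> int) :
  in_sublattice rho (a *: rho ord0 + \sum_j c j *: w j).
Proof. by exists (bary (a - \sum_j c j) c); rewrite rho_bary_combE. Qed.

Hypothesis lambda_gcd : \big[gcdn/0%N]_(i < n.+1) lambda i = 1%N.

Lemma dvdn_mul_lambda (D : nat) : (forall i, h %| D * lambda i)%N -> (h %| D)%N.
Proof.
move=> h_dvd; have : (h %| \big[gcdn/0%N]_(i < n.+1) (D * lambda i))%N.
  by apply/dvdn_biggcdP => i _; exact: h_dvd.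
by rewrite -(big_morph _ (muln_gcdr D) (muln0 D)) lambda_gcd muln1.
Qed.

Lemma rho0_order (c : int) (q : 'I_n -> int) :
  c *: rho ord0 = \sum_j q j *: w j -> (h %| `|c|)%N.
Proof.
move=> cq; pose u := bary (c - \sum_j - q j) (fun j => - q j).
have u_rel : \sum_i (u i)%:~R *: toR R (rho i) = 0.
  rewrite -toR_sumZ rho_bary_combE; under eq_bigr do rewrite scaleNr.
  by rewrite sumrN -cq subrr /toR map_mx0.
have [t ut] := rho_rel_unique u_rel.
have c_th : (c%:~R : R) = t * h%:R.
  have -> : c = \sum_i u i by rewrite sum_bary subrK.
  rewrite rmorph_sum natr_sum mulr_sumr.
  by apply: eq_bigr => i _; exact: ut.
apply: dvdn_mul_lambda => i; apply/dvdnP; exists `|u i|%N.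
have : c * (lambda i)%:Z = u i * h%:Z.
  by apply: (intr_inj (R := R)); rewrite !intrM c_th ut !pmulrn mulrAC.
by move/(congr1 absz); rewrite !abszM !absz_nat.
Qed.

Lemma w_box_congr (e : 'rV[int]_n) (delta : 'I_n -> int) :
  (forall j, `|delta j| < dW * lambda (lift ord0 j))%N ->
  (forall j, (Posz (h * dW) %| h%:Z * wcoord e ord0 j + delta j)%Z) ->
  (forall j, delta j = 0) /\ exists q : 'I_n -> int, e = \sum_j q j *: w j.
Proof.
move=> delta_lt Q_dvd; pose Q := (h * dW)%N.
have QR_gt0 : 0 < Q%:R :> R by rewrite ltr0n muln_gt0 h_gt0 dW_gt0.
have dWR_neq0 : dW%:R != 0 :> R by rewrite pnatr_eq0 -lt0n dW_gt0.
pose q j := ((h%:Z * wcoord e ord0 j + delta j) %/ Q%:Z)%Z.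
pose d j : R := - (delta j)%:~R / Q%:R.
have e_d : toR R (e - \sum_j q j *: w j) = \sum_j d j *: toR R (w j).
  apply: (scalerI dWR_neq0).
  rewrite toRB toR_sumZ scalerBr toR_wcoordP !scaler_sumr -sumrB.
  apply: eq_bigr => j _; rewrite !scalerA -scalerBl; congr (_ *: _).
  have := congr1 (intr : int -> R) (divzK (Q_dvd j)).
  rewrite -/(q j) intrD !intrM !pmulrn [X in _ * X = _]natrM => qQ.
  have -> : (wcoord e ord0 j)%:~R = ((q j)%:~R * (h%:R * dW%:R) - (delta j)%:~R) / h%:R :> R.
    by rewrite qQ addrK; field; rewrite hR_neq0.
  by rewrite /d /Q natrM; field; rewrite hR_neq0 dWR_neq0.
have d0 := w_box_lattice_point_eq0 e_d.
have {}d0 j : d j = 0.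
  apply: d0 => {}j; rewrite /d /beta normrM normrN normfV (gtr0_norm QR_gt0).
  rewrite ltr_pdivrMr // /Q natrM mulrA divfK ?hR_neq0 //.
  rewrite -intr_norm -natr_absz -natrM ltr_nat mulnC.
  exact: delta_lt.
split=> [j|].
  have /eqP := d0 j; rewrite mulf_eq0 invr_eq0 (gt_eqF QR_gt0) orbF oppr_eq0 intr_eq0.
  by move/eqP.
exists q; apply/eqP; rewrite -subr_eq0 -(toR_eq0 R) e_d.
by apply/eqP/big1 => j _; rewrite d0 scale0r.
Qed.

Section ResidueGrid.
Variable s : seq 'rV[int]_n.
Hypothesis s_inc : forall i j, (i < size s)%N -> (j < size s)%N -> i <> j ->
  ~ in_sublattice rho (s`_i - s`_j).

(* Coordinates, in the basis w scaled by h dW, of the grid point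
   s_i + k rho_0 + sum_j (r j / (h dW)) w j. *)
Definition grid_coord (i : 'I_(size s)) (k : 'I_h) (r : 'I_n -> nat) (j : 'I_n) : int :=
  h%:Z * wcoord (s`_i + k%:Z *: rho ord0) ord0 j + (r j)%:Z.

Lemma grid_coord_inj (i i' : 'I_(size s)) (k k' : 'I_h) (r r' : 'I_n -> nat) :
  (forall j, r j < dW * lambda (lift ord0 j))%N ->
  (forall j, r' j < dW * lambda (lift ord0 j))%N ->
  (forall j, grid_coord i k r j = grid_coord i' k' r' j %[mod (h * dW)%N])%Z ->
  [/\ i = i', k = k' & forall j, r j = r' j].
Proof.
move=> r_lt r'_lt ik_eq.
pose e := (s`_i + k%:Z *: rho ord0) - (s`_i' + k'%:Z *: rho ord0).
have r_lt' j : (`|(r j)%:Z - (r' j)%:Z| < dW * lambda (lift ord0 j))%N.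
  by have := r_lt j; have := r'_lt j; lia.
have e_dvd j : (Posz (h * dW) %| h%:Z * wcoord e ord0 j + ((r j)%:Z - (r' j)%:Z))%Z.
  have -> : h%:Z * wcoord e ord0 j + ((r j)%:Z - (r' j)%:Z) =
            grid_coord i k r j - grid_coord i' k' r' j.
    by rewrite /grid_coord /e wcoordB !mxE; ring.
  by rewrite -eqz_mod_dvd; apply/eqP/ik_eq.
have [r_eq [q e_q]] := w_box_congr r_lt' e_dvd.
have ii' : i = i'.
  apply/val_inj/eqP/negP => /negP ii'.
  apply: (s_inc (ltn_ord i) (ltn_ord i') (elimN eqP ii')).
  have -> : s`_i - s`_i' = (k'%:Z - k%:Z) *: rho ord0 + \sum_j q j *: w j.
    by rewrite -e_q /e; apply/rowP => l; rewrite !mxE; ring.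
  exact: w_sublattice.
split=> // [|j]; last by apply/eqP; rewrite -eqz_nat -subr_eq0 r_eq.
have h_dvd : (h %| `|k%:Z - k'%:Z|)%N.
  by apply: (rho0_order (q := q)); rewrite -e_q /e ii'; apply/rowP => l; rewrite !mxE; ring.
apply/val_inj/eqP; rewrite -eqz_nat -subr_eq0 -absz_eq0.
have := ltn_ord k; have := ltn_ord k'.
by case: (posnP `|k%:Z - k'%:Z|) => [|/dvdn_leq/(_ h_dvd)]; lia.
Qed.

Lemma residue_grid_count :
  (size s * h * \prod_(j < n) (dW * lambda (lift ord0 j)) <= (h * dW) ^ n)%N.
Proof.
pose Q := (h * dW)%N.
have Q_neq0 : Q%:Z != 0 by rewrite eqz_nat muln_eq0 negb_or -!lt0n h_gt0 dW_gt0.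
pose T := ('I_(size s) * 'I_h * {dffun forall j : 'I_n, 'I_(dW * lambda (lift ord0 j))})%type.
pose phi (p : T) : {ffun 'I_n -> 'I_Q} :=
  [ffun j => Ordinal (absz_modz_lt (grid_coord p.1.1 p.1.2 (fun l => p.2 l) j) Q_neq0)].
have phi_inj : injective phi.
  move=> [[i k] r] [[i' k'] r'] /ffunP phi_eq.
  have [] := @grid_coord_inj i i' k k' (fun j => r j) (fun j => r' j).
  - by move=> j; exact: ltn_ord.
  - by move=> j; exact: ltn_ord.
  - move=> j; have /(congr1 val) := phi_eq j; rewrite !ffunE /=.
    by move/(congr1 Posz); rewrite !gez0_abs ?modz_ge0.
  by move=> -> -> rr'; congr (_, _, _); apply/ffunP => j; exact/val_inj/rr'.
have := leq_card phi phi_inj.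
rewrite card_ffun card_ord !card_prod !card_ord.
rewrite card_dep_ffun foldrE big_map big_enum /=.
by rewrite (eq_bigr (fun j => dW * lambda (lift ord0 j)))%N => // j _; rewrite card_ord.
Qed.

End ResidueGrid.

Lemma index_bound m : is_index rho m ->
  (m * \prod_(j < n) lambda (lift ord0 j) <= h ^ n.-1)%N.
Proof.
move=> [s [<- [s_inc _]]]; have := residue_grid_count s_inc.
rewrite big_split /= prod_nat_const card_ord expnMn (mulnC (dW ^ n)%N) mulnA.
rewrite leq_pmul2r ?expn_gt0 ?dW_gt0 // => bound.
by apply: (leq_mul_expn_pred h_gt0); rewrite mulnAC.
Qed.

End FakeWeightedProjectiveSpace.

Theorem mainTheorem8 (R : realFieldType) (n : nat)
  (rho : 'I_n.+1 -> 'rV[int]_n) (lambda : 'I_n.+1 -> nat)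
  (hprim : forall i, primitive (rho i))
  (hspan : positively_spanning R rho)
  (hpos : forall i, (0 < lambda i)%N)
  (hgcd : \big[gcdn/0%N]_(i < n.+1) lambda i = 1%N)
  (hrel : \sum_(i < n.+1) (lambda i)%:Z *: rho i = 0)
  (hcan : canonical_fwps R rho) :
  exists m : nat, is_index rho m /\
    (m%:R : R) <= ((\sum_(i < n.+1) lambda i) ^ n.-1)%N%:R
                  / (\prod_(i < n) lambda (lift ord0 i))%N%:R.
Proof.
have [m m_index] := is_index_exists hspan.
exists m; split => //.
rewrite ler_pdivlMr ?ltr0n ?prodn_gt0 // -natrM ler_nat.
exact: (index_bound hspan hpos hrel hcan hgcd).
Qed.
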